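(* Let $\beta>2\alpha>0$, let $\lambda_{\min},\lambda_{\max}>0$ be the smallest and largest eigenvalues of $A$, and let $R>2\lambda_{\max}/\lambda_{\min}$, so that $c_{11}:=\frac{\lambda_{\min}}{2}-\frac{\lambda_{\max}}{R}>0$. Then for every $x\in\mathbb{R}^{s_N}$ with $\|x\|>R\sqrt N$, $$\frac{N}{s_N}\varphi_N\Big(\sqrt{\tfrac{s_N}{N}}x\Big)\ge c_{11}\|x\|_2^2.$$
   Context: $A=\beta I+\alpha(P+P^T)$ is the $s_N\times s_N$ symmetric circulant matrix ($P$ the cyclic shift), with $s_N\le N$ a positive integer; $e_k$ the standard basis of $\mathbb{R}^{s_N}$; $\varphi_N(x)=\frac12x^TAx-\sum_{k=1}^{s_N}\log\cosh(x^TAe_k)$; $\|\cdot\|=\|\cdot\|_2$ is the Euclidean norm. *)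

From HB Require Import structures.
From mathcomp Require Import all_boot all_order all_algebra.
From mathcomp Require Import all_classical all_reals all_analysis.
Set Implicit Arguments. Unset Strict Implicit. Unset Printing Implicit Defensive.
Import Order.TTheory GRing.Theory Num.Theory.
Local Open Scope ring_scope.

Definition cycshift (R : realType) (s : nat) : 'M[R]_s :=
  \matrix_(i < s, j < s) ((nat_of_ord j == (i.+1 %% s)%N)%:R).

Definition circA (R : realType) (s : nat) (alpha beta : R) : 'M[R]_s :=
  beta%:M + alpha *: (cycshift R s + (cycshift R s)^T).

Definition coshR (R : realType) (t : R) : R := (expR t + expR (- t)) / 2.

Definition norm2 (R : realType) (s : nat) (x : 'cV[R]_s) : R :=
  Num.sqrt (\sum_(i < s) x i 0 ^+ 2).

Definition phiN (R : realType) (s : nat) (alpha beta : R) (x : 'cV[R]_s) : R :=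
  2^-1 * (x^T *m circA s alpha beta *m x) 0 0
  - \sum_(k < s) ln (coshR ((x^T *m circA s alpha beta *m delta_mx k (0 : 'I_1)) 0 0)).

From mathcomp Require Import all_boot all_order all_algebra.
From mathcomp Require Import all_classical all_reals all_analysis.
From mathcomp Require Import ring lra.
Import Order.TTheory GRing.Theory Num.Theory.
Import numFieldNormedType.Exports.
Local Open Scope ring_scope.
Set Implicit Arguments. Unset Strict Implicit. Unset Printing Implicit Defensive.

(** The quadratic part of [phiN] is bounded below by [lmin |y|^2]: the minimum of
    [v A v^T] on the (compact) unit sphere is attained at an eigenvector, so it is
    an eigenvalue.  Since [ln (cosh t) <= |t|] and [A] has nonnegative entries with
    row sums [beta + 2 alpha] (an eigenvalue, for the all-ones vector), the [ln cosh]
    sum is at most [lmax |y|_1 <= lmax sqrt(s) |y|].  After the rescaling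
    [y = sqrt(s/N) x] this gives [(N/s) phiN(y) >= lmin |x|^2 / 2 - lmax sqrt(N) |x|],
    and [sqrt(N) |x| < |x|^2 / Rad]. *)

Lemma continuous_sum (R : numFieldType) (T : topologicalType) (I : Type) (r : seq I)
    (F : I -> T -> R) :
  (forall i, continuous (F i)) -> continuous (fun x => \sum_(i <- r) F i x).
Proof.
move=> Fc; elim: r => [|a r IH].
  under eq_fun do rewrite big_nil; exact: cst_continuous.
under eq_fun do rewrite big_cons.
by move=> x; apply: continuousD; [exact: Fc | exact: IH].
Qed.

Lemma quad_ge0_lin_coef_eq0 (R : realFieldType) (a b : R) :
  (forall t, 0 <= 2 * t * b + t ^+ 2 * a) -> b = 0.
Proof.
move=> quad_ge0; apply/eqP; apply/negPn/negP => b_neq0.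
pose d := `|a| + 1.
have d_gt0 : 0 < d by rewrite ltr_wpDl.
have ad_lt2 : a / d < 2.
  rewrite ltr_pdivrMr // (le_lt_trans (ler_norm a)) // /d; have := normr_ge0 a; lra.
have := quad_ge0 (- b / d).
have -> : 2 * (- b / d) * b + (- b / d) ^+ 2 * a = b ^+ 2 / d * (a / d - 2).
  by field; rewrite gt_eqF.
rewrite pmulr_rge0 ?divr_gt0 ?exprn_even_gt0 //=; lra.
Qed.

Section QuadraticForm.
Variables (R : realType) (n : nat).
Implicit Types (B : 'M[R]_n) (u v w : 'rV[R]_n).

Definition bform B u w : R := \sum_i \sum_j u 0 i * B i j * w 0 j.

Definition sqnorm v : R := \sum_i v 0 i ^+ 2.

Lemma bformE B u w : (u *m B *m w^T) 0 0 = bform B u w.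
Proof.
rewrite /bform mxE exchange_big /=; apply: eq_bigr => j _.
by rewrite !mxE mulr_suml; apply: eq_bigr => i _.
Qed.

Lemma bformC B u w : B^T = B -> bform B w u = bform B u w.
Proof.
move=> symB; rewrite /bform exchange_big /=.
apply: eq_bigr => i _; apply: eq_bigr => j _.
by rewrite -[in RHS]symB mxE; ring.
Qed.

Lemma bformDZ B u w (t : R) : B^T = B ->
  bform B (u + t *: w) (u + t *: w) =
  bform B u u + 2 * t * bform B u w + t ^+ 2 * bform B w w.
Proof.
move=> symB; have -> : bform B (u + t *: w) (u + t *: w) =
    bform B u u + t * bform B u w + t * bform B w u + t ^+ 2 * bform B w w.
  rewrite /bform !mulr_sumr -!big_split /=; apply: eq_bigr => i _.
  rewrite !mulr_sumr -!big_split /=; apply: eq_bigr => j _.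
  by rewrite !mxE; ring.
by rewrite (bformC _ _ symB); ring.
Qed.

Lemma bformZ B v (k : R) : bform B (k *: v) (k *: v) = k ^+ 2 * bform B v v.
Proof.
rewrite /bform mulr_sumr; apply: eq_bigr => i _; rewrite mulr_sumr.
by apply: eq_bigr => j _; rewrite !mxE; ring.
Qed.

Lemma bform1 v : bform 1%:M v v = sqnorm v.
Proof.
apply: eq_bigr => i _; rewrite (bigD1 i) //= big1 => [|j /negPf ji].
  by rewrite !mxE eqxx addr0 mulr1 expr2.
by rewrite !mxE eq_sym ji mulr0 mul0r.
Qed.

Lemma bformBscalar B (m : R) v :
  bform (B - m%:M) v v = bform B v v - m * sqnorm v.
Proof.
rewrite -bform1 /bform mulr_sumr -sumrB; apply: eq_bigr => i _.
rewrite mulr_sumr -sumrB; apply: eq_bigr => j _.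
by rewrite !mxE; ring.
Qed.

Lemma continuous_bform B : continuous (fun v : 'rV[R]_n => bform B v v).
Proof.
apply: continuous_sum => i; apply: continuous_sum => j v.
have coord k : continuous (fun w : 'rV[R]_n => w 0 k) := @coord_continuous R 1 n 0 k.
have cst : continuous (fun _ : 'rV[R]_n => B i j) := @cst_continuous _ _ (B i j).
exact: continuousM (continuousM (coord i v) (cst v)) (coord j v).
Qed.

Lemma sqnormE v : sqnorm v = (v *m v^T) 0 0.
Proof. by rewrite -bform1 -bformE mulmx1. Qed.

Lemma sqnorm_ge0 v : 0 <= sqnorm v.
Proof. by apply: sumr_ge0 => i _; exact: sqr_ge0. Qed.

Lemma sqnormZ (k : R) v : sqnorm (k *: v) = k ^+ 2 * sqnorm v.
Proof. by rewrite -!bform1 bformZ. Qed.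

Lemma sqnorm_eq0 v : (sqnorm v == 0) = (v == 0).
Proof.
apply/idP/eqP => [|->]; last by rewrite /sqnorm big1 // => i _; rewrite mxE expr0n.
rewrite psumr_eq0 => [/allP v0|i _]; last exact: sqr_ge0.
apply/rowP => i; rewrite mxE; apply/eqP.
by rewrite -sqrf_eq0; exact: (implyP (v0 i (mem_index_enum i))).
Qed.

End QuadraticForm.

Section Rayleigh.
Variables (R : realType) (n : nat) (A : 'M[R]_n).
Hypothesis symA : A^T = A.
Local Open Scope classical_set_scope.

Lemma continuous_sqnorm : continuous (@sqnorm R n).
Proof.
have -> : @sqnorm R n = fun v => bform 1%:M v v by apply/funext => v; rewrite bform1.
exact: continuous_bform.
Qed.

Lemma compact_unit_sphere : compact [set v : 'rV[R]_n | sqnorm v = 1].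
Proof.
apply: (@subclosed_compact _ [set v | sqnorm v = 1]
  [set v | forall i, `[-1, 1] (v ord0 i)]).
- apply: (@preimage_closed _ _ (@sqnorm R n) [set x | x = 1]); last exact: closed_eq.
  by move=> v _; exact: continuous_sqnorm.
- exact: rV_compact (fun _ => @segment_compact R _ _).
move=> v /= sphere_v i; have : v ord0 i ^+ 2 <= 1.
  by rewrite -sphere_v /sqnorm (bigD1 i) //= lerDl sumr_ge0 // => j _; exact: sqr_ge0.
by rewrite /= in_itv /=; nra.
Qed.

Lemma bform_min_homogeneous c :
    (forall v, sqnorm v = 1 -> bform A c c <= bform A v v) ->
  forall v, bform A c c * sqnorm v <= bform A v v.
Proof.
move=> c_min v; have [v0|v_neq0] := eqVneq v 0.
  by rewrite v0 -(scale0r 0) sqnormZ bformZ expr0n !mul0r mulr0.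
have v_gt0 : 0 < sqnorm v by rewrite lt_def sqnorm_eq0 v_neq0 sqnorm_ge0.
pose k := (Num.sqrt (sqnorm v))^-1.
have k2v : k ^+ 2 * sqnorm v = 1 by rewrite exprVn sqr_sqrtr ?mulVf ?gt_eqF // ltW.
have := c_min (k *: v); rewrite sqnormZ bformZ => /(_ k2v) c_le.
by rewrite -[leRHS]mul1r -k2v mulrAC ler_wpM2r ?sqnorm_ge0.
Qed.

Lemma bform_min_eigenvector c (m : R) :
    sqnorm c = 1 -> bform A c c = m -> (forall v, m * sqnorm v <= bform A v v) ->
  c *m A = m *: c.
Proof.
move=> c_unit c_val m_le.
(* [A - m] is positive semidefinite and its form vanishes at [c],
   so [c] lies in its kernel. *)
have symB : (A - m%:M)^T = A - m%:M.
  by rewrite linearB /= tr_scalar_mx symA.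
have B_ge0 v : 0 <= bform (A - m%:M) v v by rewrite bformBscalar subr_ge0.
have Bc_eq0 w : bform (A - m%:M) c w = 0.
  apply: (@quad_ge0_lin_coef_eq0 _ (bform (A - m%:M) w w)) => t.
  have := B_ge0 (c + t *: w).
  by rewrite bformDZ // bformBscalar c_val c_unit mulr1 subrr add0r.
apply/eqP; rewrite -subr_eq0 -mul_mx_scalar -mulmxBr -sqnorm_eq0 sqnormE.
by rewrite bformE Bc_eq0.
Qed.

Lemma sym_eigenvalue_le_bform : (0 < n)%N ->
  exists2 m, eigenvalue A m & forall v, m * sqnorm v <= bform A v v.
Proof.
move=> n_gt0.
have sphere_neq0 : [set v : 'rV[R]_n | sqnorm v = 1] !=set0.
  exists (delta_mx 0 (Ordinal n_gt0)); rewrite /= -bform1 -bformE mulmx1.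
  by rewrite trmx_delta mul_delta_mx mxE.
have [c /set_mem c_unit c_min] := EVT_min_rV sphere_neq0 compact_unit_sphere
  (continuous_subspaceT (@continuous_bform R n A)).
have m_le := bform_min_homogeneous (fun v v_unit => c_min v (mem_set v_unit)).
exists (bform A c c) => //; apply/eigenvalueP; exists c.
  exact: bform_min_eigenvector.
by rewrite -sqnorm_eq0 c_unit oner_eq0.
Qed.

Lemma bform_ge_eigenvalue_lb (lmin : R) : (0 < n)%N ->
    (forall a, eigenvalue A a -> lmin <= a) ->
  forall v, lmin * sqnorm v <= bform A v v.
Proof.
move=> n_gt0 lmin_le v; have [m /lmin_le lmin_m m_le] := sym_eigenvalue_le_bform n_gt0.
exact: le_trans (ler_wpM2r (sqnorm_ge0 v) lmin_m) (m_le v).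
Qed.

End Rayleigh.

Lemma ln_coshR_le_norm (R : realType) (t : R) : ln (coshR t) <= `|t|.
Proof.
have exp_le : expR t <= expR `|t| by rewrite ler_expR ler_norm.
have expN_le : expR (- t) <= expR `|t| by rewrite ler_expR -normrN ler_norm.
have cosh_gt0 : 0 < coshR t by rewrite /coshR divr_gt0 // addr_gt0 // expR_gt0.
have cosh_le : coshR t <= expR `|t| by rewrite /coshR ler_pdivrMr //; lra.
by rewrite -[leRHS]expRK ler_ln ?posrE ?expR_gt0.
Qed.

Lemma sqr_sum_le (R : realFieldType) n (u : 'I_n -> R) :
  (\sum_i u i) ^+ 2 <= n%:R * \sum_i u i ^+ 2.
Proof.
have sum_const (x : R) : \sum_(i < n) x = n%:R * x.
  by rewrite sumr_const card_ord mulr_natl.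
rewrite expr2 mulr_suml.
apply: (le_trans (y := \sum_i \sum_j (u i ^+ 2 + u j ^+ 2) / 2)).
  apply: ler_sum => i _; rewrite mulr_sumr; apply: ler_sum => j _.
  have := sqr_ge0 (u i - u j); rewrite sqrrB; lra.
under eq_bigr do rewrite -mulr_suml big_split /= sum_const.
by rewrite -mulr_suml big_split /= -mulr_sumr sum_const; lra.
Qed.

Lemma sum_norm_le_sqrt (R : rcfType) n (u : 'I_n -> R) :
  \sum_i `|u i| <= Num.sqrt n%:R * Num.sqrt (\sum_i u i ^+ 2).
Proof.
rewrite -sqrtrM ?ler0n // -[leLHS]ger0_norm ?sumr_ge0 // -sqrtr_sqr ler_sqrt.
  rewrite [X in _ * X](eq_bigr (fun i => `|u i| ^+ 2)) => [|i _].
    exact: (sqr_sum_le (fun i => `|u i|)).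
  by rewrite real_normK ?num_real.
by rewrite mulr_ge0 ?ler0n ?sumr_ge0 // => i _; exact: sqr_ge0.
Qed.

Lemma eigenvalue_colsum (R : fieldType) n (B : 'M[R]_n) r : (0 < n)%N ->
  (forall j, \sum_i B i j = r) -> eigenvalue B r.
Proof.
move=> n_gt0 colsum; apply/eigenvalueP; exists (const_mx 1).
  apply/rowP => j; rewrite !mxE -(colsum j) mulr1.
  by apply: eq_bigr => i _; rewrite mxE mul1r.
by apply/eqP => /rowP/(_ (Ordinal n_gt0))/eqP; rewrite !mxE oner_eq0.
Qed.

Lemma sum_norm_mulmx_le (R : realDomainType) n (B : 'M[R]_n) (u : 'rV[R]_n) r :
    (forall i j, 0 <= B i j) -> (forall i, \sum_j B i j <= r) ->
  \sum_j `|(u *m B) 0 j| <= r * \sum_i `|u 0 i|.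
Proof.
move=> B_ge0 rowsum_le.
apply: (le_trans (y := \sum_j \sum_i `|u 0 i| * B i j)).
  apply: ler_sum => j _; rewrite mxE; apply: le_trans (ler_norm_sum _ _ _) _.
  by apply: ler_sum => i _; rewrite normrM [`|B i j|]ger0_norm.
rewrite exchange_big mulr_sumr /=; apply: ler_sum => i _.
by rewrite -mulr_sumr mulrC ler_wpM2r.
Qed.

Section Circulant.
Variables (R : realType) (s : nat) (alpha beta : R).
Local Notation P := (cycshift R s).
Local Notation A := (circA s alpha beta).

Lemma cycshift_rowsum i : \sum_j P i j = 1.
Proof.
rewrite (bigD1 (ordS i)) //= big1 => [|j /negPf ji]; first by rewrite mxE eqxx addr0.
by rewrite mxE -[(_ %% s)%N]/(val (ordS i)) val_eqE ji.
Qed.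

Lemma cycshift_colsum j : \sum_i P i j = 1.
Proof.
rewrite (bigD1 (ord_pred j)) //= big1 => [|i ij].
  by rewrite mxE -[(_ %% s)%N]/(val (ordS (ord_pred j))) ord_predK eqxx addr0.
rewrite mxE -[(_ %% s)%N]/(val (ordS i)); case: eqP => // /val_inj ji.
by move: ij; rewrite ji ordSK eqxx.
Qed.

Lemma circAE i j : A i j = beta * (i == j)%:R + alpha * (P i j + P j i).
Proof. by rewrite /circA !mxE mulr_natr. Qed.

Lemma circA_sym : A^T = A.
Proof.
by rewrite /circA linearD linearZ linearD /= tr_scalar_mx trmxK [_^T + _]addrC.
Qed.

Lemma circA_ge0 i j : 0 <= alpha -> 0 <= beta -> 0 <= A i j.
Proof. by move=> a0 b0; rewrite circAE !mxE addr_ge0 ?mulr_ge0 ?addr_ge0. Qed.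

Lemma circA_rowsum i : \sum_j A i j = beta + 2 * alpha.
Proof.
under eq_bigr do rewrite circAE.
rewrite big_split -!mulr_sumr big_split /= cycshift_rowsum cycshift_colsum.
rewrite (bigD1 i) //= big1 => [|j /negPf ji]; last by rewrite eq_sym ji.
by rewrite eqxx addr0 mulr1; ring.
Qed.

Lemma eigenvalue_circA : (0 < s)%N -> eigenvalue A (beta + 2 * alpha).
Proof.
move=> s_gt0; apply: eigenvalue_colsum s_gt0 _ => j.
by rewrite -(circA_rowsum j); apply: eq_bigr => i _; rewrite -{1}circA_sym mxE.
Qed.

End Circulant.

Section PhiN.
Variables (R : realType) (s : nat) (alpha beta : R).
Hypotheses (alpha_ge0 : 0 <= alpha) (beta_ge0 : 0 <= beta).
Local Notation A := (circA s alpha beta).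

Lemma norm2E (x : 'cV[R]_s) : norm2 x = Num.sqrt (sqnorm x^T).
Proof. by congr Num.sqrt; apply: eq_bigr => i _; rewrite mxE. Qed.

Lemma norm2Z (c : R) (x : 'cV[R]_s) : 0 <= c -> norm2 (c *: x) = c * norm2 x.
Proof.
move=> c_ge0; rewrite !norm2E linearZ /= sqnormZ sqrtrM ?sqr_ge0 //.
by rewrite sqrtr_sqr ger0_norm.
Qed.

Lemma sum_ln_coshR_le (y : 'cV[R]_s) :
  \sum_k ln (coshR ((y^T *m A *m delta_mx k (0 : 'I_1)) 0 0)) <=
  (beta + 2 * alpha) * \sum_i `|y i 0|.
Proof.
apply: (le_trans (y := \sum_k `|(y^T *m A) 0 k|)).
  by apply: ler_sum => k _; rewrite -colE mxE; exact: ln_coshR_le_norm.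
have -> : \sum_i `|y i 0| = \sum_i `|y^T 0 i| by apply: eq_bigr => i _; rewrite mxE.
apply: sum_norm_mulmx_le => [i j|i]; first exact: circA_ge0.
by rewrite circA_rowsum.
Qed.

Lemma phiN_ge (lmin lmax : R) (y : 'cV[R]_s) : (0 < s)%N ->
    (forall a, eigenvalue A a -> lmin <= a <= lmax) ->
  lmin / 2 * norm2 y ^+ 2 - lmax * Num.sqrt s%:R * norm2 y <= phiN alpha beta y.
Proof.
move=> s_gt0 spectrum.
have quad : lmin * norm2 y ^+ 2 <= (y^T *m A *m y) 0 0.
  rewrite norm2E sqr_sqrtr ?sqnorm_ge0 // -{3}(trmxK y) bformE.
  apply: (bform_ge_eigenvalue_lb (circA_sym s alpha beta) s_gt0).
  by move=> a /spectrum /andP[].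
have lmax_ge : beta + 2 * alpha <= lmax.
  by have /andP[] := spectrum _ (eigenvalue_circA alpha beta s_gt0).
have lin : \sum_k ln (coshR ((y^T *m A *m delta_mx k (0 : 'I_1)) 0 0)) <=
    lmax * Num.sqrt s%:R * norm2 y.
  apply: le_trans (sum_ln_coshR_le y) _; rewrite -mulrA.
  apply: ler_pM; [by rewrite addr_ge0 ?mulr_ge0 | by rewrite sumr_ge0 | by [] |].
  exact: sum_norm_le_sqrt.
rewrite /phiN; lra.
Qed.

End PhiN.

Theorem lemma7p8 (R : realType) (N s : nat) (alpha beta lmin lmax Rad : R) :
  (0 < s)%N -> (s <= N)%N ->
  0 < alpha -> 2 * alpha < beta ->
  eigenvalue (circA s alpha beta) lmin ->
  eigenvalue (circA s alpha beta) lmax ->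
  (forall a : R, eigenvalue (circA s alpha beta) a -> lmin <= a <= lmax) ->
  0 < lmin -> 0 < lmax ->
  2 * lmax / lmin < Rad ->
  forall x : 'cV[R]_s,
    Rad * Num.sqrt (N%:R) < norm2 x ->
    (N%:R / s%:R) * phiN alpha beta (Num.sqrt (s%:R / N%:R) *: x)
      >= (lmin / 2 - lmax / Rad) * norm2 x ^+ 2.
Proof.
move=> s_gt0 sN alpha_gt0 beta_gt _ _ spectrum lmin_gt0 lmax_gt0 Rad_gt x x_gt.
have s_pos : 0 < s%:R :> R by rewrite ltr0n.
have N_pos : 0 < N%:R :> R by rewrite ltr0n (leq_trans s_gt0 sN).
have Rad_gt0 : 0 < Rad by apply: lt_trans Rad_gt; rewrite divr_gt0 ?mulr_gt0.
set a := Num.sqrt (s%:R : R); set b := Num.sqrt (N%:R : R); set n := norm2 x.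
have a_gt0 : 0 < a by rewrite sqrtr_gt0.
have b_gt0 : 0 < b by rewrite sqrtr_gt0.
have n_gt0 : 0 < n by apply: le_lt_trans x_gt; rewrite mulr_ge0 ?ltW.
have c_eq : Num.sqrt (s%:R / N%:R) = a / b by rewrite sqrtrM ?sqrtrV // ltW.
have beta_ge0 : 0 <= beta by apply: le_trans (ltW beta_gt); rewrite mulr_ge0 ?ltW.
have := phiN_ge (ltW alpha_gt0) beta_ge0 (Num.sqrt (s%:R / N%:R) *: x) s_gt0 spectrum.
rewrite norm2Z ?sqrtr_ge0 // c_eq -/n => phi_ge.
have rescale : N%:R / s%:R * (lmin / 2 * (a / b * n) ^+ 2 - lmax * a * (a / b * n)) =
    lmin / 2 * n ^+ 2 - lmax * b * n.
  rewrite -(sqr_sqrtr (ltW s_pos)) -(sqr_sqrtr (ltW N_pos)) -/a -/b.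
  by field; rewrite !gt_eqF.
have tail : lmax * b * n <= lmax / Rad * n ^+ 2.
  have -> : lmax * b * n = lmax / Rad * n * (Rad * b) by field; rewrite gt_eqF.
  rewrite [n ^+ 2]expr2 [leRHS]mulrA; apply: ler_wpM2l; last exact: ltW.
  by rewrite mulr_ge0 ?divr_ge0 ?ltW.
apply: le_trans (ler_wpM2l (divr_ge0 (ltW N_pos) (ltW s_pos)) phi_ge).
rewrite rescale; lra.
Qed.
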